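(* Let $\mathbf{A}=(A,<^{\mathbf{A}},P_1^{\mathbf{A}},P_2^{\mathbf{A}})\in\mathcal{P}_2$. Then the tournament $p(\mathbf{A})$ is isomorphic to an induced subtournament of $\mathbf{S}(2)$.
   Context: $\mathcal{P}_2$ is the class of finite structures $(A,<^{\mathbf{A}},P_1^{\mathbf{A}},P_2^{\mathbf{A}})$ with $<^{\mathbf{A}}$ a linear order on $A$ and $(P_1^{\mathbf{A}},P_2^{\mathbf{A}})$ a partition of $A$. Writing $a\sim b$ when $a,b$ lie in the same part, $p(\mathbf{A})$ is the tournament on $A$ with an arc from $a$ to $b$ iff either ($a\sim b$ and $a<^{\mathbf{A}}b$) or ($a\not\sim b$ and $b<^{\mathbf{A}}a$). $\mathbf{S}(2)$ is the tournament whose vertices are the points of the unit circle of $\mathbb{C}$ with rational argument, with an arc from $x$ to $y$ iff $0<\arg(y/x)<\pi$. *)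

From Stdlib Require Import Reals QArith List.
From Coquelicot Require Import Coquelicot.
Open Scope R_scope.

Record P2_struct : Type := {
  carrier :> Type;
  lt : carrier -> carrier -> Prop;
  P1 : carrier -> Prop;
  P2 : carrier -> Prop;
  finite : exists l : list carrier, forall x, In x l;
  lt_irrefl : forall x, ~ lt x x;
  lt_trans : forall x y z, lt x y -> lt y z -> lt x z;
  lt_total : forall x y, x <> y -> lt x y \/ lt y x;
  part_cover : forall x, P1 x \/ P2 x;
  part_disj : forall x, ~ (P1 x /\ P2 x)
}.

Definition same_part (A : P2_struct) (a b : A) : Prop :=
  (P1 A a /\ P1 A b) \/ (P2 A a /\ P2 A b).

Definition p_arc (A : P2_struct) (a b : A) : Prop :=
  (same_part A a b /\ lt A a b) \/ (~ same_part A a b /\ lt A b a).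

Definition is_princ_arg (z : C) (theta : R) : Prop :=
  - PI < theta <= PI /\ z = Cmult (RtoC (Cmod z)) (cos theta, sin theta).

Definition S2_pt (z : C) : Prop :=
  Cmod z = 1 /\ exists q : Q, is_princ_arg z (Q2R q).

Definition S2 : Type := { z : C | S2_pt z }.

Definition S2_arc (x y : S2) : Prop :=
  exists theta, is_princ_arg (Cdiv (proj1_sig y) (proj1_sig x)) theta /\ 0 < theta < PI.

From Stdlib Require Import Reals QArith List Qreals ZArith Lra Lia ClassicalEpsilon.
From Coquelicot Require Import Coquelicot.
Open Scope R_scope.

(* Rank the elements along <, and give each one the angle rank/(N+1) in (0,1),
   shifted by a rational r slightly larger than pi for the elements of P2.
   The arc x -> y of S(2) holds iff sin (arg y - arg x) > 0.  Inside a part the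
   angle difference is small, so its sign is that of the order; across parts the
   almost antipodal shift by r reverses that sign, exactly as p(A) does. *)

Lemma Q_between (x y : R) : x < y -> exists q : Q, x < Q2R q < y.
Proof.
  intros Hxy.
  destruct (archimed_cor1 (y - x)) as [n [Hn Hn0]]; [lra|].
  pose (k := Pos.of_succ_nat (pred n)).
  assert (Hk : IZR (Zpos k) = INR n).
  { unfold k. rewrite Zpos_P_of_succ_nat, succ_IZR, <- INR_IZR_INZ, <- S_INR.
    f_equal. lia. }
  assert (Hn1 : 0 < INR n) by (apply lt_0_INR; lia).
  exists (Qmake (up (x * INR n)) k).
  unfold Q2R; cbn [Qnum Qden]. rewrite Hk.
  destruct (archimed (x * INR n)) as [Hup1 Hup2].
  assert (Hq : IZR (up (x * INR n)) / INR n * INR n = IZR (up (x * INR n))) by (field; lra).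
  assert (Hy : 1 < (y - x) * INR n).
  { replace 1 with (/ INR n * INR n) by (field; lra). apply Rmult_lt_compat_r; lra. }
  split; apply (Rmult_lt_reg_r (INR n)); lra.
Qed.

Lemma sin_pos_iff (x : R) : - PI < x < PI -> (0 < sin x <-> 0 < x).
Proof.
  intros Hx. split; intros H.
  - destruct (Rlt_or_le 0 x) as [Hp|Hp]; [exact Hp|].
    destruct (Req_dec x 0) as [->|Hn]; [rewrite sin_0 in H; lra|].
    pose proof (sin_lt_0_var x); lra.
  - apply sin_gt_0; lra.
Qed.

Lemma sin_add_PI_pos_iff (x : R) : - PI < x < PI -> (0 < sin (x + PI) <-> x < 0).
Proof.
  intros Hx. rewrite neg_sin.
  assert (0 < sin (- x) <-> 0 < - x) by (apply sin_pos_iff; lra).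
  rewrite sin_neg in H. lra.
Qed.

Lemma sin_sub_PI_pos_iff (x : R) : - PI < x < PI -> (0 < sin (x - PI) <-> x < 0).
Proof.
  intros Hx. rewrite sin_minus, sin_PI, cos_PI, Rmult_0_r, Rminus_0_r.
  replace (sin x * -1) with (- sin x) by ring.
  assert (0 < sin (- x) <-> 0 < - x) by (apply sin_pos_iff; lra).
  rewrite sin_neg in H. lra.
Qed.

Lemma finite_strict_order_rank (T : Type) (prec : T -> T -> Prop) :
  (exists l : list T, forall x, In x l) ->
  (forall x, ~ prec x x) -> (forall x y z, prec x y -> prec y z -> prec x z) ->
  exists (N : nat) (rank : T -> nat),
    (forall a, (rank a < N)%nat) /\ (forall a b, prec a b -> (rank a < rank b)%nat).
Proof.
  intros [l Hl] Hirr Htrans.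
  pose (elems := nodup (fun x y : T => excluded_middle_informative (x = y)) l).
  assert (Helems : forall x, In x elems) by (intros x; apply nodup_In, Hl).
  pose (below := fun a : T =>
    filter (fun x => if excluded_middle_informative (prec x a) then true else false) elems).
  assert (Hbelow_nodup : forall a, NoDup (below a)) by (intros a; apply NoDup_filter, NoDup_nodup).
  assert (Hbelow : forall a x, In x (below a) <-> prec x a).
  { intros a x. unfold below. rewrite filter_In.
    destruct (excluded_middle_informative (prec x a)) as [H | H].
    - split; [tauto | auto].
    - split; [intros [_ F]; discriminate F | tauto]. }
  exists (S (length elems)), (fun a => length (below a)). split.
  - intros a. enough (length (below a) <= length elems)%nat by lia.
    apply NoDup_incl_length; [apply Hbelow_nodup | intros x _; apply Helems].
  - intros a b Hab. change (length (a :: below a) <= length (below b))%nat.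
    apply NoDup_incl_length.
    + constructor; [rewrite Hbelow; apply Hirr | apply Hbelow_nodup].
    + intros x [<- | Hx]; rewrite Hbelow; [exact Hab|].
      rewrite Hbelow in Hx. eauto.
Qed.

Lemma rank_fractions (T : Type) (prec : T -> T -> Prop) (N : nat) (rank : T -> nat) :
  (forall a, (rank a < N)%nat) -> (forall a b, prec a b -> (rank a < rank b)%nat) ->
  exists (theta : T -> Q) (d : R), 0 < d /\
    (forall a, d <= Q2R (theta a) < 1) /\
    (forall a b, prec a b -> Q2R (theta a) + d <= Q2R (theta b)).
Proof.
  intros Hbound Hmono.
  exists (fun a => Qmake (Z.of_nat (S (rank a))) (Pos.of_succ_nat N)), (/ INR (S N)).
  assert (Hfrac : forall a, Q2R (Qmake (Z.of_nat (S (rank a))) (Pos.of_succ_nat N))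
                            = INR (S (rank a)) / INR (S N)).
  { intros a. unfold Q2R; cbn [Qnum Qden].
    rewrite Zpos_P_of_succ_nat, <- Nat2Z.inj_succ, <- !INR_IZR_INZ. reflexivity. }
  assert (HN : 0 < INR (S N)) by (apply lt_0_INR; lia).
  split; [apply Rinv_0_lt_compat, HN | split].
  - intros a. rewrite Hfrac.
    assert (1 <= INR (S (rank a)) < INR (S N)).
    { split; [apply (le_INR 1) | apply lt_INR]; pose proof (Hbound a); lia. }
    split.
    + apply (Rmult_le_reg_r (INR (S N))); [lra|]. field_simplify; lra.
    + apply (Rmult_lt_reg_r (INR (S N))); [lra|]. field_simplify; lra.
  - intros a b Hab. rewrite !Hfrac.
    assert (INR (S (rank a)) + 1 <= INR (S (rank b))).
    { rewrite <- S_INR. apply le_INR. pose proof (Hmono a b Hab). lia. }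
    apply (Rmult_le_reg_r (INR (S N))); [lra|]. field_simplify; lra.
Qed.

Definition unit_pt (x : R) : C := (cos x, sin x).

Lemma Cmod_unit_pt (x : R) : Cmod (unit_pt x) = 1.
Proof.
  unfold Cmod, unit_pt; cbn [fst snd].
  rewrite <- sqrt_1, <- (sin2_cos2 x). unfold Rsqr. f_equal. ring.
Qed.

Lemma princ_arg_unit_pt (x : R) : - PI < x <= PI -> is_princ_arg (unit_pt x) x.
Proof.
  intros Hx. split; [exact Hx|].
  rewrite Cmod_unit_pt. unfold unit_pt, Cmult, RtoC; cbn [fst snd]. f_equal; ring.
Qed.

Lemma S2_pt_unit_pt (q : Q) : - PI < Q2R q <= PI -> S2_pt (unit_pt (Q2R q)).
Proof. intros Hq. split; [apply Cmod_unit_pt | exists q; apply princ_arg_unit_pt, Hq]. Qed.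

Lemma Cdiv_unit_pt (x y : R) : Cdiv (unit_pt y) (unit_pt x) = unit_pt (y - x).
Proof.
  unfold Cdiv, Cinv, Cmult, unit_pt; cbn [fst snd].
  rewrite cos_minus, sin_minus.
  replace (cos x ^ 2 + sin x ^ 2) with 1
    by (rewrite <- (sin2_cos2 x); unfold Rsqr; ring).
  f_equal; field.
Qed.

Lemma princ_arg_unit_pt_upper_iff (x : R) : - (2 * PI) < x < 2 * PI ->
  (exists theta, is_princ_arg (unit_pt x) theta /\ 0 < theta < PI) <-> 0 < sin x.
Proof.
  intros Hx. pose proof PI_RGT_0. split.
  - intros [theta [[_ Heq] Htheta]].
    rewrite Cmod_unit_pt in Heq. unfold unit_pt, Cmult, RtoC in Heq; cbn [fst snd] in Heq.
    injection Heq as _ Hsin. rewrite Hsin.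
    pose proof (sin_gt_0 theta); lra.
  - intros Hsin.
    assert (Hx' : 0 < x < PI \/ - (2 * PI) < x < - PI).
    { destruct (Rle_or_lt x (- PI)) as [Hlo|Hlo].
      { destruct (Req_dec x (- PI)) as [->|]; [rewrite sin_neg, sin_PI in Hsin|right]; lra. }
      destruct (Rlt_or_le x PI) as [Hhi|Hhi].
      - left. pose proof (proj1 (sin_pos_iff x ltac:(lra)) Hsin); lra.
      - pose proof (sin_le_0 x); lra. }
    destruct Hx' as [Hx'|Hx'].
    + exists x. split; [apply princ_arg_unit_pt|]; lra.
    + exists (x + 2 * PI). split; [split; [lra|] | lra].
      rewrite Cmod_unit_pt. unfold unit_pt, Cmult, RtoC; cbn [fst snd].
      rewrite cos_plus, sin_plus, cos_2PI, sin_2PI. f_equal; ring.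
Qed.

Lemma p_arc_total (A : P2_struct) (a b : A) : a <> b -> p_arc A a b \/ p_arc A b a.
Proof.
  intros Hab. unfold p_arc.
  assert (same_part A a b <-> same_part A b a) by (unfold same_part; tauto).
  destruct (lt_total A a b Hab); tauto.
Qed.

Section AngleEmbedding.

Variable A : P2_struct.
Variable theta : A -> Q.
Variables (d : R) (r : Q).
Hypothesis theta_range : forall a, d <= Q2R (theta a) < 1.
Hypothesis theta_sep : forall a b, lt A a b -> Q2R (theta a) + d <= Q2R (theta b).
Hypothesis r_near_PI : PI < Q2R r < PI + d.

Definition angle (a : A) : Q :=
  if excluded_middle_informative (P1 A a) then theta a else (theta a - r)%Q.

Lemma angle_cases (a : A) :
  (P1 A a /\ Q2R (angle a) = Q2R (theta a)) \/
  (P2 A a /\ ~ P1 A a /\ Q2R (angle a) = Q2R (theta a) - Q2R r).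
Proof.
  unfold angle. destruct (excluded_middle_informative (P1 A a)) as [H1 | H1].
  - left; auto.
  - right. rewrite Q2R_minus. destruct (part_cover A a); tauto.
Qed.

Lemma angle_range (a : A) : - PI < Q2R (angle a) <= PI.
Proof.
  pose proof (theta_range a). pose proof PI2_3_2.
  destruct (angle_cases a) as [[_ ->] | [_ [_ ->]]]; lra.
Qed.

Lemma theta_lt_iff (a b : A) : lt A a b <-> Q2R (theta a) < Q2R (theta b).
Proof.
  split; intros H.
  - pose proof (theta_sep a b H). pose proof (theta_range a). lra.
  - destruct (excluded_middle_informative (a = b)) as [<- | Hab]; [lra|].
    destruct (lt_total A a b Hab) as [|Hba]; [assumption|].
    pose proof (theta_sep b a Hba). pose proof (theta_range a). lra.
Qed.

Lemma theta_separated (a b : A) : a <> b ->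
  d <= Q2R (theta b) - Q2R (theta a) \/ Q2R (theta b) - Q2R (theta a) <= - d.
Proof.
  intros Hab. destruct (lt_total A a b Hab) as [H | H];
    pose proof (theta_sep _ _ H); [left | right]; lra.
Qed.

Lemma p_arc_iff_sin_pos (a b : A) :
  p_arc A a b <-> 0 < sin (Q2R (angle b) - Q2R (angle a)).
Proof.
  pose proof (theta_range a); pose proof (theta_range b); pose proof PI2_3_2.
  pose proof (part_disj A a); pose proof (part_disj A b).
  set (x := Q2R (theta b) - Q2R (theta a)).
  set (e := Q2R r - PI).
  assert (Hx : -1 < x < 1) by (unfold x; lra).
  assert (He : 0 < e < d) by (unfold e; lra).
  assert (Hlt : lt A a b <-> 0 < x) by (unfold x; rewrite theta_lt_iff; lra).
  assert (Hgt : lt A b a <-> x < 0) by (unfold x; rewrite theta_lt_iff; lra).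
  unfold p_arc, same_part.
  destruct (angle_cases a) as [[Ha ->] | [Ha [Ha' ->]]];
  destruct (angle_cases b) as [[Hb ->] | [Hb [Hb' ->]]].
  - rewrite Hlt, sin_pos_iff by (unfold x; lra). fold x. tauto.
  - assert (Hab : a <> b) by (intros <-; tauto).
    pose proof (theta_separated a b Hab) as Hsep; fold x in Hsep.
    replace (Q2R (theta b) - Q2R r - Q2R (theta a)) with ((x - e) - PI) by (unfold x, e; ring).
    rewrite Hgt, sin_sub_PI_pos_iff by lra. intuition lra.
  - assert (Hab : a <> b) by (intros <-; tauto).
    pose proof (theta_separated a b Hab) as Hsep; fold x in Hsep.
    replace (Q2R (theta b) - (Q2R (theta a) - Q2R r)) with ((x + e) + PI) by (unfold x, e; ring).
    rewrite Hgt, sin_add_PI_pos_iff by lra. intuition lra.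
  - replace (Q2R (theta b) - Q2R r - (Q2R (theta a) - Q2R r)) with x by (unfold x; ring).
    rewrite Hlt, sin_pos_iff by (unfold x; lra). tauto.
Qed.

Definition angle_pt (a : A) : S2 :=
  exist S2_pt (unit_pt (Q2R (angle a))) (S2_pt_unit_pt (angle a) (angle_range a)).

Lemma S2_arc_angle_pt (a b : A) :
  S2_arc (angle_pt a) (angle_pt b) <-> 0 < sin (Q2R (angle b) - Q2R (angle a)).
Proof.
  unfold S2_arc, angle_pt; cbn [proj1_sig]. rewrite Cdiv_unit_pt.
  apply princ_arg_unit_pt_upper_iff.
  pose proof (angle_range a); pose proof (angle_range b). lra.
Qed.

Lemma angle_pt_injective (a b : A) : angle_pt a = angle_pt b -> a = b.
Proof.
  intros Heq. destruct (excluded_middle_informative (a = b)) as [|Hab]; [assumption|].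
  exfalso.
  assert (Hself : forall c, ~ S2_arc (angle_pt c) (angle_pt c)).
  { intros c. rewrite S2_arc_angle_pt, Rminus_diag, sin_0. lra. }
  destruct (p_arc_total A a b Hab) as [H | H];
    rewrite p_arc_iff_sin_pos, <- S2_arc_angle_pt, Heq in H; exact (Hself _ H).
Qed.

End AngleEmbedding.

Theorem lemma1 (A : P2_struct) :
  exists f : A -> S2,
    (forall a b, f a = f b -> a = b) /\
    (forall a b, p_arc A a b <-> S2_arc (f a) (f b)).
Proof.
  destruct (finite_strict_order_rank A (lt A) (finite A) (lt_irrefl A) (lt_trans A))
    as [N [rank [Hbound Hmono]]].
  destruct (rank_fractions A (lt A) N rank Hbound Hmono) as [theta [d [Hd [Hrange Hsep]]]].
  destruct (Q_between PI (PI + d)) as [r Hr]; [lra|].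
  exists (angle_pt A theta d r Hrange Hr). split.
  - apply (angle_pt_injective A theta d r Hrange Hsep Hr).
  - intros a b. rewrite S2_arc_angle_pt. apply (p_arc_iff_sin_pos A theta d r Hrange Hsep Hr).
Qed.
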